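(* Let $f:2^V\to\mathbb{R}$ be submodular, let $x^1,\dots,x^d\in[0,1]^n$ and $w_1,\dots,w_d\in\mathbb{R}$, and let $\mu=\sum_{j=1}^d w_j x^j$. If $\sigma_\mu$ is any permutation ordering $\mu$ (i.e. $\mu(\sigma_\mu(1))\ge\cdots\ge\mu(\sigma_\mu(n))$), then $$\sigma_\mu\in\arg\min_{\sigma}\ \sum_{j=1}^d w_j\, d_{\hat f}(x^j\|\sigma),$$ the minimum being over all permutations $\sigma$ of $V$. In particular (taking $w_j=1/d$), a permutation ordering the arithmetic mean $\frac1d\sum_j x^j$ minimizes $\sum_{j=1}^d d_{\hat f}(x^j\|\sigma)$; equivalently, the minimizing permutation is obtained by sorting the scores $\sum_{j} w_j x^j_i$, $i=1,\dots,n$, in decreasing order.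
   Context: Let $V=\{1,\dots,n\}$. A permutation $\sigma$ is a bijection $V\to V$, where $\sigma(i)$ is the element placed at rank $i$. Write $S^\sigma_0=\emptyset$, $S^\sigma_j=\{\sigma(1),\dots,\sigma(j)\}$. For $f:2^V\to\mathbb{R}$ define $h^f_\sigma\in\mathbb{R}^n$ by $h^f_\sigma(\sigma(j))=f(S^\sigma_j)-f(S^\sigma_{j-1})$. For $x\in\mathbb{R}^n$, $\sigma_x$ orders $x$ if $x(\sigma_x(1))\ge\cdots\ge x(\sigma_x(n))$; the Lovász extension is $\hat f(x)=\langle x,h^f_{\sigma_x}\rangle$ (independent of the choice of $\sigma_x$). $f$ is submodular if $f(S)+f(T)\ge f(S\cup T)+f(S\cap T)$ for all $S,T$. The LB divergence is $d_{\hat f}(x\|\sigma)=\hat f(x)-\langle x,h^f_\sigma\rangle$ for $x\in[0,1]^n$. *)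

(* V = {1..n} is represented by 'I_n = {0..n-1}; ranks are
   likewise 0-indexed: sigma : 'S_n maps rank i to an element of V. *)
From HB Require Import structures.
From mathcomp Require Import all_boot all_order all_fingroup all_algebra.
Set Implicit Arguments. Unset Strict Implicit. Unset Printing Implicit Defensive.
Import Order.TTheory GRing.Theory Num.Theory.
Local Open Scope ring_scope.

Definition prefix_set (n : nat) (s : 'S_n) (j : nat) : {set 'I_n} :=
  [set s i | i : 'I_n & (i < j)%N].

(* h^f_sigma : h(sigma(j)) = f(S_j) - f(S_{j-1}) (1-indexed ranks);
   for v = sigma(k) with 0-indexed rank k = sigma^-1 v, this is
   f(S_{k+1}) - f(S_k). *)
Definition hvec (R : numDomainType) (n : nat) (f : {set 'I_n} -> R)
    (s : 'S_n) (v : 'I_n) : R :=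
  f (prefix_set s ((s^-1)%g v).+1) - f (prefix_set s ((s^-1)%g v)).

Definition inner (R : numDomainType) (n : nat) (x y : 'I_n -> R) : R :=
  \sum_(i < n) x i * y i.

Definition orders (R : numDomainType) (n : nat) (x : 'I_n -> R) (s : 'S_n) : bool :=
  [forall i : 'I_n, forall j : 'I_n, (i <= j)%N ==> (x (s j) <= x (s i))].

Definition submodular (R : numDomainType) (n : nat) (f : {set 'I_n} -> R) : Prop :=
  forall S T : {set 'I_n}, f (S :|: T) + f (S :&: T) <= f S + f T.

(* Lovasz extension: <x, h^f_{sigma_x}> for some permutation sigma_x ordering x
   (the choice is irrelevant; a default is used only if none existed). *)
Definition lovasz (R : numDomainType) (n : nat) (f : {set 'I_n} -> R)
    (x : 'I_n -> R) : R :=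
  inner x (hvec f (odflt 1%g [pick s : 'S_n | orders x s])).

Definition lb_div (R : numDomainType) (n : nat) (f : {set 'I_n} -> R)
    (x : 'I_n -> R) (s : 'S_n) : R :=
  lovasz f x - inner x (hvec f s).

From HB Require Import structures.
From mathcomp Require Import all_boot all_order all_fingroup all_algebra.
From mathcomp Require Import lra.
Import Order.TTheory GRing.Theory Num.Theory.
Local Open Scope ring_scope.

(* Write mu = \sum_j w_j x^j.  Since d(x || s) = fhat(x) - <x, h_s>,
   the weighted objective equals a constant minus <mu, h_s> (lemma
   [weighted_lb_div]), so it suffices to show that a permutation ordering mu
   maximises s |-> <mu, h_s>.  This is the classical greedy argument:
   - for submodular f, every greedy vector h_s satisfies
     h_s(T) <= f(T) - f(empty) for all T (it lies in the base polyhedron,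
     [hvec_sum_le]), with equality on the prefix sets of s itself
     ([hvec_sum_prefix]);
   - Abel summation along the ordering smu writes <mu, y> as a combination
     of the prefix sums y(S^smu_k) whose coefficients mu(smu k) - mu(smu k+1)
     are nonnegative except the last one, which multiplies y(V) = f(V) - f(empty)
     for every greedy y ([abel_prefix]). *)

Section PrefixSums.
Variables (R : realFieldType) (n : nat).
Implicit Types (s : 'S_n) (f : {set 'I_n} -> R).

Lemma mem_prefix s j v : (v \in prefix_set s j) = ((s^-1)%g v < j)%N.
Proof.
apply/imsetP/idP => [[i]|hv]; first by rewrite inE => hi ->; rewrite permK.
by exists ((s^-1)%g v); rewrite ?inE // permKV.
Qed.

Lemma prefix_set0 s : prefix_set s 0 = set0.
Proof. by apply/setP => v; rewrite mem_prefix inE. Qed.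

Lemma prefix_setn s : prefix_set s n = setT.
Proof. by apply/setP => v; rewrite mem_prefix inE ltn_ord. Qed.

Lemma mem_prefixS s v u :
  (u \in prefix_set s ((s^-1)%g v).+1) =
  (u \in prefix_set s ((s^-1)%g v)) || (u == v).
Proof.
rewrite !mem_prefix ltnS leq_eqVlt orbC; congr (_ || _).
by rewrite (inj_eq val_inj) (inj_eq (@perm_inj _ _)).
Qed.

Lemma telescope_perm (G : nat -> R) s :
  \sum_(v : 'I_n) (G ((s^-1)%g v).+1 - G ((s^-1)%g v)) = G n - G 0%N.
Proof.
rewrite (reindex_inj (@perm_inj _ s)) /=.
under eq_bigr do rewrite permK.
by rewrite -(big_mkord xpredT (fun k => G k.+1 - G k)) telescope_sumr.
Qed.

(* Greedy vectors of a submodular function lie in its base polyhedron: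
   h_s(T) <= f(T) - f(empty).  Telescope along the chain T :&: S^s_j and
   bound each increment by submodularity. *)
Lemma hvec_sum_le f s (T : {set 'I_n}) :
  submodular f -> \sum_(v in T) hvec f s v <= f T - f set0.
Proof.
move=> f_sub; pose G j := f (T :&: prefix_set s j).
have -> : f T - f set0 = G n - G 0%N by rewrite /G prefix_setn prefix_set0 setIT setI0.
rewrite -(telescope_perm G s) big_mkcond /=; apply: ler_sum => v _.
set r := (s^-1)%g v; have eqS := mem_prefixS s v.
case: ifP => vT; last first.
  have -> : G r.+1 = G r.
    rewrite /G; congr f; apply/setP => u; rewrite !inE eqS.
    by case: eqP => [->|]; rewrite ?vT ?orbF.
  by rewrite subrr.
have cup : prefix_set s r :|: (T :&: prefix_set s r.+1) = prefix_set s r.+1.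
  apply/setP => u; rewrite !inE !eqS; case: (u \in prefix_set s r) => //=.
  by case: (u =P v) => [->|]; rewrite ?vT ?andbF.
have cap : prefix_set s r :&: (T :&: prefix_set s r.+1) = T :&: prefix_set s r.
  apply/setP => u; rewrite !inE !eqS.
  by case: (u \in prefix_set s r); rewrite ?andbF ?andbT.
have := f_sub (prefix_set s r) (T :&: prefix_set s r.+1).
rewrite cup cap /hvec -/r /G => ineq; lra.
Qed.

Lemma hvec_sum_prefix f s j : (j <= n)%N ->
  \sum_(v in prefix_set s j) hvec f s v = f (prefix_set s j) - f set0.
Proof.
move=> jn; pose H i := f (prefix_set s (minn i j)).
have -> : f (prefix_set s j) - f set0 = H n - H 0%N.
  by rewrite /H min0n prefix_set0 (minn_idPr jn).
rewrite -(telescope_perm H s) big_mkcond /=; apply: eq_bigr => v _.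
rewrite mem_prefix /hvec /H; case: ltnP => h; first by rewrite (minn_idPl h).
by rewrite (minn_idPr (leqW h)) subrr.
Qed.

Lemma hvec_sum_total f s : \sum_v hvec f s v = f setT - f set0.
Proof.
by rewrite -(prefix_setn s) -hvec_sum_prefix // prefix_setn; apply: eq_bigl => v; rewrite inE.
Qed.

End PrefixSums.

Section AbelSummation.
Variables (R : realFieldType) (n : nat) (mu : 'I_n -> R) (s : 'S_n).

Definition mu_along (k : nat) : R :=
  if insub k is Some i then mu (s i) else 0.

Definition abel_coef (k : nat) : R := mu_along k - mu_along k.+1.

Lemma mu_along_ord (i : 'I_n) : mu_along i = mu (s i).
Proof. by rewrite /mu_along valK. Qed.

Lemma mu_along_out {k} : (n <= k)%N -> mu_along k = 0.
Proof. by move=> nk; rewrite /mu_along insubF // ltnNge nk. Qed.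

Lemma abel_prefix (y : 'I_n -> R) :
  inner mu y = \sum_(k < n) abel_coef k * \sum_(v in prefix_set s k.+1) y v.
Proof.
under eq_bigr do rewrite mulr_sumr big_mkcond.
rewrite exchange_big /inner; apply: eq_bigr => v _ /=.
rewrite -big_mkcond /= -mulr_suml; congr (_ * _).
under eq_bigl do rewrite mem_prefix ltnS.
rewrite (eq_bigl (fun i : 'I_n => xpredT i && ((s^-1)%g v <= i)%N)) //.
rewrite -(@big_geq_mkord _ _ _ _ _ xpredT abel_coef) /=.
under eq_bigr do rewrite /abel_coef -opprB.
rewrite sumrN telescope_sumr; last exact: ltnW.
by rewrite opprB (mu_along_out (leqnn n)) subr0 mu_along_ord permKV.
Qed.

Lemma abel_coef_ge0 k : orders mu s -> (k.+1 < n)%N -> 0 <= abel_coef k.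
Proof.
move=> /forallP s_ord kn; rewrite /abel_coef subr_ge0.
have := forallP (s_ord (Ordinal (ltnW kn))) (Ordinal kn).
by rewrite -(mu_along_ord (Ordinal kn)) -(mu_along_ord (Ordinal (ltnW kn))) /= leqnSn.
Qed.

End AbelSummation.

(* The greedy vector of a permutation ordering mu maximises <mu, h_s> over s
   (Edmonds' greedy algorithm on the base polyhedron of a submodular f). *)
Lemma inner_hvec_le_ordering (R : realFieldType) (n : nat)
    (f : {set 'I_n} -> R) (mu : 'I_n -> R) (smu s : 'S_n) :
  submodular f -> orders mu smu -> inner mu (hvec f s) <= inner mu (hvec f smu).
Proof.
move=> f_sub smu_ord; rewrite !(@abel_prefix R n mu smu); apply: ler_sum => k _.
have [kn|] := ltnP k.+1 n.
  rewrite hvec_sum_prefix 1?ltnW //; apply: ler_wpM2l; first exact: abel_coef_ge0.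
  exact: hvec_sum_le.
move=> nk; have -> : k.+1 = n by apply/eqP; rewrite eqn_leq nk ltn_ord.
by rewrite prefix_setn !(eq_bigl _ _ (in_setT (T := 'I_n))) !hvec_sum_total.
Qed.

Lemma weighted_lb_div (R : realFieldType) (n d : nat) (f : {set 'I_n} -> R)
    (x : 'I_d -> 'I_n -> R) (w : 'I_d -> R) (s : 'S_n) :
  \sum_(j < d) w j * lb_div f (x j) s =
  \sum_(j < d) w j * lovasz f (x j)
    - inner (fun i => \sum_(j < d) w j * x j i) (hvec f s).
Proof.
rewrite /lb_div; under eq_bigr do rewrite mulrBr.
rewrite sumrB; congr (_ - _); rewrite /inner.
under eq_bigr do rewrite mulr_sumr.
rewrite exchange_big; apply: eq_bigr => i _; rewrite mulr_suml.
by apply: eq_bigr => j _; rewrite mulrA.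
Qed.

Theorem mainTheorem13 (R : realFieldType) (n d : nat)
    (f : {set 'I_n} -> R) (x : 'I_d -> 'I_n -> R) (w : 'I_d -> R) :
  submodular f ->
  (forall j i, 0 <= x j i <= 1) ->
  forall smu : 'S_n,
    orders (fun i => \sum_(j < d) w j * x j i) smu ->
    forall s : 'S_n,
      \sum_(j < d) w j * lb_div f (x j) smu <= \sum_(j < d) w j * lb_div f (x j) s.
Proof.
move=> f_sub _ smu smu_ord s.
rewrite !weighted_lb_div lerD2l lerN2.
exact: inner_hvec_le_ordering.
Qed.
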